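(* Let $m>n$ be integers, $\Lambda=I_m$, $\theta_*\in\mathbb{R}^m$, $\sigma^2\ge0$. Define the deterministic equivalents for the min-norm random features interpolator as follows. If $p>n$ (over-parameterized), with $\lambda_n$ solving $\operatorname{Tr}(\Lambda(\Lambda+\lambda_nI)^{-1})=n$: $\mathsf{B}_{\mathsf{N},0}=\frac{p\langle\theta_*,(\Lambda+\lambda_nI)^{-1}\theta_*\rangle}{p-n}$, $\mathsf{V}_{\mathsf{N},0}=\frac{\sigma^2p}{\lambda_n(p-n)}$, $\mathsf{B}_{\mathsf{R},0}=\frac{n\lambda_n^2\langle\theta_*,(\Lambda+\lambda_nI)^{-2}\theta_*\rangle}{n-\operatorname{Tr}(\Lambda^2(\Lambda+\lambda_nI)^{-2})}+\frac{n\lambda_n\langle\theta_*,(\Lambda+\lambda_nI)^{-1}\theta_*\rangle}{p-n}$, $\mathsf{V}_{\mathsf{R},0}=\frac{\sigma^2\operatorname{Tr}(\Lambda^2(\Lambda+\lambda_nI)^{-2})}{n-\operatorname{Tr}(\Lambda^2(\Lambda+\lambda_nI)^{-2})}+\frac{\sigma^2n}{p-n}$. If $p<n$ (under-parameterized), with $\lambda_p$ solving $\operatorname{Tr}(\Lambda(\Lambda+\lambda_pI)^{-1})=p$: $\mathsf{B}_{\mathsf{N},0}=\frac{p\langle\theta_*,\Lambda(\Lambda+\lambda_pI)^{-2}\theta_*\rangle}{n-\operatorname{Tr}(\Lambda^2(\Lambda+\lambda_pI)^{-2})}+\frac{p\langle\theta_*,(\Lambda+\lambda_pI)^{-1}\theta_*\rangle}{n-p}$,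 $\mathsf{V}_{\mathsf{N},0}=\frac{\sigma^2p}{\lambda_p(n-p)}$, $\mathsf{B}_{\mathsf{R},0}=\frac{n\lambda_p\langle\theta_*,(\Lambda+\lambda_pI)^{-1}\theta_*\rangle}{n-p}$, $\mathsf{V}_{\mathsf{R},0}=\frac{\sigma^2p}{n-p}$. Let $\mathsf{R}_0=\mathsf{B}_{\mathsf{R},0}+\mathsf{V}_{\mathsf{R},0}$ and $\mathsf{N}_0=\mathsf{B}_{\mathsf{N},0}+\mathsf{V}_{\mathsf{N},0}$. Then in the over-parameterized regime $p>n$, $$\mathsf{R}_0=\frac{m-n}{n}\mathsf{N}_0+\frac{2n-m}{m-n}\sigma^2,$$ and in the under-parameterized regime $p<n$, $$\big(\mathsf{V}_{\mathsf{R},0}\big)^2=\frac{m-n}{n}\mathsf{V}_{\mathsf{R},0}\mathsf{V}_{\mathsf{N},0}+\frac{m\sigma^2}{n}\mathsf{V}_{\mathsf{N},0},$$ $$(m-n)\mathsf{B}_{\mathsf{N},0}\big(m\mathsf{B}_{\mathsf{R},0}-n\|\theta_*\|_2^2\big)\big(m\mathsf{B}_{\mathsf{R},0}^2-n\|\theta_*\|_2^4\big)=nm\big(\mathsf{B}_{\mathsf{R},0}-\|\theta_*\|_2^2\big)^2\big[m\mathsf{B}_{\mathsf{R},0}^2+n\|\theta_*\|_2^2\mathsf{B}_{\mathsf{R},0}-2n\|\theta_*\|_2^4\big].$$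
   Context: These quantities are the deterministic equivalents of the bias/variance of the excess risk ($\mathsf{B}_{\mathsf{R},0},\mathsf{V}_{\mathsf{R},0}$) and of the squared $\ell_2$ norm ($\mathsf{B}_{\mathsf{N},0},\mathsf{V}_{\mathsf{N},0}$) of the minimum-norm random features interpolator with $n$ samples and $p$ features, feature spectrum $\Lambda$, target coefficients $\theta_*$ and noise variance $\sigma^2$; they are defined directly by the formulas in the claim, here with isotropic finite-rank spectrum $\Lambda=I_m$. *)

From mathcomp Require Import all_boot all_order all_algebra.
Set Implicit Arguments. Unset Strict Implicit. Unset Printing Implicit Defensive.
Import Order.TTheory GRing.Theory Num.Theory.
Local Open Scope ring_scope.

Section DE.
Variables (R : realFieldType) (m : nat).
Implicit Types (L : 'M[R]_m) (th : 'cV[R]_m) (lam : R) (n p : nat).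

Definition resolv L lam : 'M[R]_m := invmx (L + lam%:M).
Definition qform th (A : 'M[R]_m) : R := (th^T *m A *m th) 0 0.
Definition sqnorm th : R := (th^T *m th) 0 0.
Definition df1 L lam : R := \tr (L *m resolv L lam).
Definition df2 L lam : R := \tr (L *m L *m resolv L lam *m resolv L lam).

(* Over-parameterized regime p > n, lam = lambda_n *)
Definition BN0_over n p L th lam : R :=
  p%:R * qform th (resolv L lam) / (p%:R - n%:R).
Definition VN0_over n p (sigma2 : R) lam : R :=
  sigma2 * p%:R / (lam * (p%:R - n%:R)).
Definition BR0_over n p L th lam : R :=
  n%:R * lam ^+ 2 * qform th (resolv L lam *m resolv L lam) / (n%:R - df2 L lam)
  + n%:R * lam * qform th (resolv L lam) / (p%:R - n%:R).
Definition VR0_over n p L (sigma2 : R) lam : R :=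
  sigma2 * df2 L lam / (n%:R - df2 L lam) + sigma2 * n%:R / (p%:R - n%:R).

(* Under-parameterized regime p < n, lam = lambda_p *)
Definition BN0_under n p L th lam : R :=
  p%:R * qform th (L *m resolv L lam *m resolv L lam) / (n%:R - df2 L lam)
  + p%:R * qform th (resolv L lam) / (n%:R - p%:R).
Definition VN0_under n p (sigma2 : R) lam : R :=
  sigma2 * p%:R / (lam * (n%:R - p%:R)).
Definition BR0_under n p L th lam : R :=
  n%:R * lam * qform th (resolv L lam) / (n%:R - p%:R).
Definition VR0_under n p (sigma2 : R) : R :=
  sigma2 * p%:R / (n%:R - p%:R).
End DE.

(** For Lambda = I_m the resolvent is the scalar (1 + lam)^-1, so every
   deterministic equivalent collapses to a scalar multiple of ||theta||^2 or
   sigma^2, and the degrees-of-freedom equation Tr(Lambda (Lambda + lam)^-1) = k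
   pins down 1 + lam = m / k.  In each regime the equivalents thus become
   explicit rational functions of m, n, p, ||theta||^2 and sigma^2, and the
   claimed relations are identities between rational functions, valid as
   soon as the denominators m, n, m - n, |p - n|, m - p and n m - p^2 are
   nonzero. *)
From mathcomp Require Import all_boot all_order all_algebra.
From mathcomp Require Import ring.
Set Implicit Arguments.
Unset Strict Implicit.
Unset Printing Implicit Defensive.

Import Order.TTheory GRing.Theory Num.Theory.
Local Open Scope ring_scope.

Section ScalarSpectrum.
Variables (R : realFieldType) (m : nat).
Implicit Types (c lam : R) (th : 'cV[R]_m).

Lemma resolv_scalar c lam : resolv (c%:M : 'M[R]_m) lam = ((c + lam)^-1)%:M.
Proof. by rewrite /resolv -raddfD invmx_scalar. Qed.

Lemma qform_scalar th c : qform th c%:M = c * sqnorm th.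
Proof. by rewrite /qform /sqnorm mul_mx_scalar -scalemxAl mxE. Qed.

Lemma df1_scalar c lam : df1 (c%:M : 'M[R]_m) lam = c / (c + lam) * m%:R.
Proof. by rewrite /df1 resolv_scalar -scalar_mxM mxtrace_scalar mulr_natr. Qed.

Lemma df2_scalar c lam :
  df2 (c%:M : 'M[R]_m) lam = (c / (c + lam)) ^+ 2 * m%:R.
Proof.
by rewrite /df2 resolv_scalar -!scalar_mxM mxtrace_scalar mulr_natr; congr (_ *+ _); ring.
Qed.

Lemma df1_scalar_gt0 c lam : (0 < m)%N -> 0 < c -> 0 < lam ->
  0 < df1 (c%:M : 'M[R]_m) lam.
Proof.
by move=> m_gt0 c_gt0 lam_gt0; rewrite df1_scalar !mulr_gt0 ?invr_gt0 ?addr_gt0 ?ltr0n.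
Qed.

Lemma df2_scalar_df1 c lam :
  df2 (c%:M : 'M[R]_m) lam = df1 (c%:M : 'M[R]_m) lam ^+ 2 / m%:R.
Proof.
rewrite df2_scalar df1_scalar.
have [->|m_neq0] := eqVneq (m%:R : R) 0; first by rewrite !mulr0 expr0n mul0r.
by rewrite [in RHS]exprMn [m%:R ^+ 2]expr2 mulrA mulfK.
Qed.

Lemma lambda_of_df1_scalar (k : nat) c lam : (0 < k)%N ->
  df1 (c%:M : 'M[R]_m) lam = k%:R -> lam = c * (m%:R - k%:R) / k%:R.
Proof.
move=> k_gt0; rewrite df1_scalar => df1k.
have k_neq0 : k%:R != 0 :> R by rewrite pnatr_eq0 -lt0n.
have c_neq0 : c != 0.
  by apply/eqP => c0; move: k_neq0; rewrite -df1k c0 !mul0r eqxx.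
have c_lam_neq0 : c + lam != 0.
  by apply/eqP => c_lam0; move: k_neq0; rewrite -df1k c_lam0 invr0 mulr0 mul0r eqxx.
have -> : m%:R = k%:R * (c + lam) / c :> R.
  by rewrite -df1k; field; rewrite c_neq0 c_lam_neq0.
by field; rewrite c_neq0 k_neq0.
Qed.

End ScalarSpectrum.

Section OverParameterized.
Variables (R : realFieldType) (m n p : nat) (th : 'cV[R]_m) (s lam : R).
Local Notation I := (1%:M : 'M[R]_m).
Hypotheses (n_gt0 : (0 < n)%N) (n_lt_m : (n < m)%N) (n_lt_p : (n < p)%N).
Hypothesis df1_n : df1 I lam = n%:R.

Let n_neq0 : n%:R != 0 :> R. Proof. by rewrite pnatr_eq0 -lt0n. Qed.
Let m_neq0 : m%:R != 0 :> R. Proof. by rewrite pnatr_eq0 -lt0n (ltn_trans n_gt0). Qed.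
Let m_sub_n_neq0 : m%:R - n%:R != 0 :> R.
Proof. by rewrite subr_eq0 eqr_nat neq_ltn n_lt_m orbT. Qed.
Let p_sub_n_neq0 : p%:R - n%:R != 0 :> R.
Proof. by rewrite subr_eq0 eqr_nat neq_ltn n_lt_p orbT. Qed.
Let nz := (n_neq0, m_neq0, m_sub_n_neq0, p_sub_n_neq0).

Let lam_n : lam = (m%:R - n%:R) / n%:R.
Proof. by rewrite (lambda_of_df1_scalar n_gt0 df1_n) mul1r. Qed.
Let df2_n : df2 I lam = n%:R ^+ 2 / m%:R.
Proof. by rewrite df2_scalar_df1 df1_n. Qed.
Let n_sub_df2 : n%:R - df2 I lam = n%:R * (m%:R - n%:R) / m%:R.
Proof. by rewrite df2_n; field; rewrite ?nz. Qed.

Lemma BN0_over_isotropic :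
  BN0_over n p I th lam = n%:R * p%:R * sqnorm th / (m%:R * (p%:R - n%:R)).
Proof. by rewrite /BN0_over resolv_scalar qform_scalar lam_n; field; rewrite ?nz. Qed.

Lemma VN0_over_isotropic :
  VN0_over n p s lam = s * n%:R * p%:R / ((m%:R - n%:R) * (p%:R - n%:R)).
Proof. by rewrite /VN0_over lam_n; field; rewrite ?nz. Qed.

Lemma BR0_over_isotropic :
  BR0_over n p I th lam = (m%:R - n%:R) * p%:R * sqnorm th / (m%:R * (p%:R - n%:R)).
Proof.
rewrite /BR0_over n_sub_df2 resolv_scalar -scalar_mxM !qform_scalar lam_n.
by field; rewrite ?nz.
Qed.

Lemma VR0_over_isotropic :
  VR0_over n p I s lam = s * n%:R / (m%:R - n%:R) + s * n%:R / (p%:R - n%:R).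
Proof. by rewrite /VR0_over n_sub_df2 df2_n; field; rewrite ?nz. Qed.

Lemma risk_over_isotropic :
  BR0_over n p I th lam + VR0_over n p I s lam
  = (m%:R - n%:R) / n%:R * (BN0_over n p I th lam + VN0_over n p s lam)
    + (2 * n%:R - m%:R) / (m%:R - n%:R) * s.
Proof.
rewrite BR0_over_isotropic VR0_over_isotropic BN0_over_isotropic VN0_over_isotropic.
by field; rewrite ?nz.
Qed.

End OverParameterized.

Section UnderParameterized.
Variables (R : realFieldType) (m n p : nat) (th : 'cV[R]_m) (s lam : R).
Local Notation I := (1%:M : 'M[R]_m).
Hypotheses (p_gt0 : (0 < p)%N) (p_lt_n : (p < n)%N) (n_lt_m : (n < m)%N).
Hypothesis df1_p : df1 I lam = p%:R.

Let p_lt_m : (p < m)%N. Proof. exact: ltn_trans n_lt_m. Qed.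
Let p_neq0 : p%:R != 0 :> R. Proof. by rewrite pnatr_eq0 -lt0n. Qed.
Let m_neq0 : m%:R != 0 :> R. Proof. by rewrite pnatr_eq0 -lt0n (ltn_trans p_gt0). Qed.
Let m_sub_p_neq0 : m%:R - p%:R != 0 :> R.
Proof. by rewrite subr_eq0 eqr_nat neq_ltn p_lt_m orbT. Qed.
Let n_sub_p_neq0 : n%:R - p%:R != 0 :> R.
Proof. by rewrite subr_eq0 eqr_nat neq_ltn p_lt_n orbT. Qed.
Let nm_sub_pp_neq0 : n%:R * m%:R - p%:R ^+ 2 != 0 :> R.
Proof.
by rewrite subr_eq0 -natrM -natrX eqr_nat neq_ltn (ltn_mul p_lt_n p_lt_m) orbT.
Qed.
Let n_neq0 : n%:R != 0 :> R. Proof. by rewrite pnatr_eq0 -lt0n (ltn_trans p_gt0). Qed.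
Let nz := (p_neq0, n_neq0, m_neq0, m_sub_p_neq0, n_sub_p_neq0, nm_sub_pp_neq0).

Let lam_p : lam = (m%:R - p%:R) / p%:R.
Proof. by rewrite (lambda_of_df1_scalar p_gt0 df1_p) mul1r. Qed.
Let df2_p : df2 I lam = p%:R ^+ 2 / m%:R.
Proof. by rewrite df2_scalar_df1 df1_p. Qed.
Let n_sub_df2 : n%:R - df2 I lam = (n%:R * m%:R - p%:R ^+ 2) / m%:R.
Proof. by rewrite df2_p; field; rewrite ?nz. Qed.

Lemma BN0_under_isotropic :
  BN0_under n p I th lam = p%:R ^+ 3 * sqnorm th / (m%:R * (n%:R * m%:R - p%:R ^+ 2))
                           + p%:R ^+ 2 * sqnorm th / (m%:R * (n%:R - p%:R)).
Proof.
rewrite /BN0_under n_sub_df2 resolv_scalar mul1mx -scalar_mxM !qform_scalar lam_p.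
by field; rewrite ?nz.
Qed.

Lemma VN0_under_isotropic :
  VN0_under n p s lam = s * p%:R ^+ 2 / ((m%:R - p%:R) * (n%:R - p%:R)).
Proof. by rewrite /VN0_under lam_p; field; rewrite ?nz. Qed.

Lemma BR0_under_isotropic :
  BR0_under n p I th lam = n%:R * (m%:R - p%:R) * sqnorm th / (m%:R * (n%:R - p%:R)).
Proof. by rewrite /BR0_under resolv_scalar qform_scalar lam_p; field; rewrite ?nz. Qed.

Lemma variance_under_isotropic :
  VR0_under n p s ^+ 2
  = (m%:R - n%:R) / n%:R * VR0_under n p s * VN0_under n p s lam
    + m%:R * s / n%:R * VN0_under n p s lam.
Proof. by rewrite /VR0_under VN0_under_isotropic; field; rewrite ?nz. Qed.

Lemma bias_under_isotropic :
  let BR := BR0_under n p I th lam in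
  let BN := BN0_under n p I th lam in
  let t2 := sqnorm th in
  (m%:R - n%:R) * BN * (m%:R * BR - n%:R * t2) * (m%:R * BR ^+ 2 - n%:R * t2 ^+ 2)
  = n%:R * m%:R * (BR - t2) ^+ 2 * (m%:R * BR ^+ 2 + n%:R * t2 * BR - 2 * n%:R * t2 ^+ 2).
Proof.
rewrite /= BR0_under_isotropic BN0_under_isotropic.
by field; rewrite ?nz.
Qed.

End UnderParameterized.

Theorem corollary7 (R : realFieldType) (m n p : nat) (th : 'cV[R]_m) (sigma2 : R) :
  (0 < n)%N -> (n < m)%N -> 0 <= sigma2 ->
  (* over-parameterized regime, Lambda = I_m, lam = lambda_n *)
  ((n < p)%N -> forall lam : R, 0 < lam -> df1 (1%:M : 'M[R]_m) lam = n%:R ->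
     let R0 := BR0_over n p (1%:M : 'M[R]_m) th lam + VR0_over n p (1%:M : 'M[R]_m) sigma2 lam in
     let N0 := BN0_over n p (1%:M : 'M[R]_m) th lam + VN0_over n p sigma2 lam in
     R0 = (m%:R - n%:R) / n%:R * N0 + (2 * n%:R - m%:R) / (m%:R - n%:R) * sigma2)
  /\
  (* under-parameterized regime, Lambda = I_m, lam = lambda_p *)
  ((p < n)%N -> forall lam : R, 0 < lam -> df1 (1%:M : 'M[R]_m) lam = p%:R ->
     let VR := VR0_under n p sigma2 in
     let VN := VN0_under n p sigma2 lam in
     let BR := BR0_under n p (1%:M : 'M[R]_m) th lam in
     let BN := BN0_under n p (1%:M : 'M[R]_m) th lam in
     let t2 := sqnorm th in
     VR ^+ 2 = (m%:R - n%:R) / n%:R * VR * VN + m%:R * sigma2 / n%:R * VN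
     /\
     (m%:R - n%:R) * BN * (m%:R * BR - n%:R * t2) * (m%:R * BR ^+ 2 - n%:R * t2 ^+ 2)
     = n%:R * m%:R * (BR - t2) ^+ 2
       * (m%:R * BR ^+ 2 + n%:R * t2 * BR - 2 * n%:R * t2 ^+ 2)).
Proof.
move=> n_gt0 n_lt_m _; split.
  by move=> n_lt_p lam _ df1_n; exact: risk_over_isotropic.
move=> p_lt_n lam lam_gt0 df1_p.
have p_gt0 : (0 < p)%N.
  by rewrite -(ltr0n R) -df1_p df1_scalar_gt0 // (ltn_trans n_gt0).
split; first exact: variance_under_isotropic.
exact: bias_under_isotropic.
Qed.
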